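(* Let $f_N=\sum_{k=0}^{N}\binom{N}{k}^3$ denote the $N$-th Franel number. For every non-negative integer $n$, $$v_2(f_{2n+1})\ge 1+v_2\Big(\binom{2n}{n}\Big),\qquad v_2(f_{2n})\ge v_2\Big(\binom{2n}{n}\Big).$$
   Context: $v_2(y)$ denotes the $2$-adic valuation of an integer $y$, i.e. the exponent of the highest power of $2$ dividing $y$. *)

From mathcomp Require Import all_boot.
Set Implicit Arguments. Unset Strict Implicit. Unset Printing Implicit Defensive.

Definition franel (N : nat) : nat := \sum_(0 <= k < N.+1) 'C(N, k) ^ 3.

Definition v2 (y : nat) : nat := logn 2 y.

From mathcomp Require Import all_boot zify ring.

(* Expanding one factor of C(n,k)^3 by Vandermonde's identity, exchanging the
   sums and applying Vandermonde again gives Strehl's identity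
   f_n = sum_i C(n,i)^2 C(2(n-i), n) = sum_i C(n,2i) C(2i,i) C(2(n-i), n-i).
   Since a! b! divides (a+b)!, Legendre's formula v2 C(2m,m) = m - v2 m! makes
   m |-> v2 C(2m,m) subadditive, so 2^(v2 C(2n,n)) divides every
   C(2i,i) C(2(n-i), n-i), hence f_n. Finally v2 C(4n,2n) = v2 C(2n,n) and
   v2 C(4n+2,2n+1) = v2 C(2n,n) + 1. *)

Lemma mul_bin_nested n k i : k <= n ->
  'C(n, k) * 'C(k, i) = 'C(n, i) * 'C(n - i, n - k).
Proof.
move=> le_kn; have [lt_ki | le_ik] := ltnP k i.
  rewrite [in LHS](bin_small lt_ki) muln0.
  have [le_in | lt_ni] := leqP i n; last by rewrite bin_small.
  by rewrite [X in _ * X]bin_small ?muln0 //; lia.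
have le_in := leq_trans le_ik le_kn.
have sub_nik : n - i - (n - k) = k - i by lia.
apply/eqP; rewrite -(eqn_pmul2r (_ : 0 < i`! * (k - i)`! * (n - k)`!)); last first.
  by rewrite !muln_gt0 !fact_gt0.
apply/eqP; transitivity (n`!).
  by rewrite -(bin_fact le_kn) -(bin_fact le_ik); ring.
rewrite -(bin_fact le_in) -(bin_fact (leq_sub2l n le_ik)) sub_nik; ring.
Qed.

Lemma sum_mul_bin a b N : a < N ->
  \sum_(i < N) 'C(a, i) * 'C(b, i) = 'C(a + b, a).
Proof.
move=> lt_aN; rewrite addnC -Vandermonde.
rewrite (big_ord_widen _ (fun i => 'C(b, i) * 'C(a, a - i)) lt_aN).
rewrite [RHS]big_mkcond /=.
apply: eq_bigr => i _ /=; case: ltnP => [le_ia | lt_ai]; last by rewrite bin_small.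
by rewrite bin_sub // mulnC.
Qed.

Lemma franel_Strehl n :
  franel n = \sum_(i < n.+1) 'C(n, i) ^ 2 * 'C((n - i).*2, n).
Proof.
rewrite /franel big_mkord.
transitivity (\sum_(k < n.+1) \sum_(i < n.+1)
                'C(n, k) ^ 2 * ('C(k, i) * 'C(n - k, i))).
  apply: eq_bigr => -[k /= lt_kn] _.
  by rewrite -big_distrr /= sum_mul_bin // subnKC // expnSr.
rewrite exchange_big /=; apply: eq_bigr => i _.
rewrite -addnn -Vandermonde big_distrr /=; apply: eq_bigr => -[k /= le_kn] _.
transitivity ('C(n, k) * 'C(k, i) * ('C(n, n - k) * 'C(n - k, i))).
  by rewrite bin_sub //; ring.
by rewrite !mul_bin_nested ?leq_subr // subKn //; ring.
Qed.

(* When 2i <= n both sides equal C(n,i) C(n-i,i) C(2(n-i), n-i). *)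
Lemma Strehl_term_central_bin n i :
  'C(n, i) ^ 2 * 'C((n - i).*2, n) =
  'C(n, i.*2) * 'C(i.*2, i) * 'C((n - i).*2, n - i).
Proof.
have [lt_n2i | le_2in] := ltnP n i.*2.
  rewrite [in RHS]bin_small // !mul0n.
  have [le_in | lt_ni] := leqP i n; last by rewrite bin_small.
  by rewrite [X in _ * X]bin_small ?muln0 //; lia.
have le_in : i <= n by lia.
have le_i_ni : i <= n - i by lia.
have le_n2m : n <= (n - i).*2 by lia.
have pick_i := @mul_bin_nested _ _ i le_2in.
have pick_m := @mul_bin_nested _ _ (n - i) le_n2m.
have sub_n2i : n - i.*2 = n - i - i by lia.
have sub_2mm : (n - i).*2 - (n - i) = n - i by lia.
have sub_2mn : (n - i).*2 - n = n - i - i by lia.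
rewrite sub_n2i (bin_sub le_i_ni) in pick_i.
rewrite sub_2mm sub_2mn (bin_sub le_i_ni) (bin_sub le_in) in pick_m.
rewrite pick_i.
transitivity ('C(n, i) * ('C((n - i).*2, n) * 'C(n, i))); first by ring.
by rewrite pick_m; ring.
Qed.

Lemma logn_fact_add p a b : logn p a`! + logn p b`! <= logn p (a + b)`!.
Proof.
rewrite -lognM ?fact_gt0 //; apply: dvdn_leq_log; first exact: fact_gt0.
by rewrite -(bin_fact (leq_addr b a)) addKn dvdn_mull.
Qed.

Lemma v2_fact_odd m : v2 m.*2.+1`! = v2 m.*2`!.
Proof.
rewrite /v2 factS lognM ?fact_gt0 // logn_coprime //.
by rewrite coprime2n /= odd_double.
Qed.

Lemma v2_fact_double m : v2 m.*2`! = m + v2 m`!.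
Proof.
elim: m => [|m IHm] //.
have -> : v2 m.+1.*2`! = logn 2 m.+1.*2 + v2 m.*2.+1`!.
  by rewrite doubleS factS /v2 lognM ?fact_gt0.
rewrite v2_fact_odd IHm -muln2 [in RHS]factS /v2 !lognM ?fact_gt0 //.
by rewrite (pfactorK 1) //; lia.
Qed.

Lemma v2_central_bin m : v2 'C(m.*2, m) + v2 m`! = m.
Proof.
have /(congr1 v2) := bin_fact (leq_addr m m); rewrite addKn addnn v2_fact_double.
rewrite /v2 !lognM ?muln_gt0 ?fact_gt0 ?bin_gt0 -?addnn ?leq_addr //; lia.
Qed.

Lemma v2_central_bin_add a b :
  v2 'C((a + b).*2, a + b) <= v2 'C(a.*2, a) + v2 'C(b.*2, b).
Proof.
have := logn_fact_add 2 a b; have := v2_central_bin (a + b).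
have := v2_central_bin a; have := v2_central_bin b; rewrite /v2; lia.
Qed.

Lemma v2_central_bin_double n : v2 'C(n.*2.*2, n.*2) = v2 'C(n.*2, n).
Proof.
have := v2_central_bin n; have := v2_central_bin n.*2.
rewrite v2_fact_double; lia.
Qed.

Lemma v2_central_bin_odd n : v2 'C(n.*2.+1.*2, n.*2.+1) = (v2 'C(n.*2, n)).+1.
Proof.
have := v2_central_bin n; have := v2_central_bin n.*2.+1.
rewrite v2_fact_odd v2_fact_double; lia.
Qed.

Lemma central_bin_gt0 m : 0 < 'C(m.*2, m).
Proof. by rewrite bin_gt0 -addnn leq_addr. Qed.

Lemma dvdn_mul_central_bin a b :
  2 ^ v2 'C((a + b).*2, a + b) %| 'C(a.*2, a) * 'C(b.*2, b).
Proof.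
rewrite pfactor_dvdn ?muln_gt0 ?central_bin_gt0 // lognM ?central_bin_gt0 //.
exact: v2_central_bin_add.
Qed.

Lemma franel_gt0 n : 0 < franel n.
Proof. by rewrite /franel big_nat_recl // bin0 exp1n. Qed.

Lemma dvdn_franel n : 2 ^ v2 'C(n.*2, n) %| franel n.
Proof.
rewrite franel_Strehl; apply: dvdn_sum => -[i /= lt_in] _.
rewrite Strehl_term_central_bin -mulnA dvdn_mull //.
by have := dvdn_mul_central_bin i (n - i); rewrite subnKC.
Qed.

Theorem corollary4 (n : nat) :
  1 + v2 'C(n.*2, n) <= v2 (franel n.*2.+1) /\ v2 'C(n.*2, n) <= v2 (franel n.*2).
Proof.
split.
  rewrite add1n -v2_central_bin_odd /v2 -pfactor_dvdn ?franel_gt0 //.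
  exact: dvdn_franel.
rewrite -v2_central_bin_double /v2 -pfactor_dvdn ?franel_gt0 //.
exact: dvdn_franel.
Qed.
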